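(* Let $F$ be a non-archimedean local field over a dyadic place, with valuation ring $\mathfrak{o}$ and maximal ideal $\mathfrak{p}$. Let $\lambda\in\mathfrak{o}$, $\lambda\neq 0$, with $ord_\mathfrak{p}(\lambda)\in\{0,1\}$. Then the lattice $\mathfrak{o}^2$ is $\mathfrak{o}$-maximal for the quadratic form $q(x,y)=x^2+\lambda y^2$ on $F^2$ if and only if $\mathfrak{d}(-\lambda)=\mathfrak{p}$.
   Context: A lattice is a finitely generated $\mathfrak{o}$-submodule spanning $F^2$; its norm $\mathfrak{n}\Lambda$ is the fractional ideal generated by $q(\Lambda)$; $\Lambda$ is $\mathfrak{o}$-maximal if $\mathfrak{n}\Lambda\subset\mathfrak{o}$ and no lattice $\Lambda'\supsetneq\Lambda$ has $\mathfrak{n}\Lambda'\subset\mathfrak{o}$. The quadratic defect of $\alpha\in F$ is $\mathfrak{d}(\alpha)=\bigcap_{\xi\in F}(\alpha-\xi^2)\mathfrak{o}$ (so $\mathfrak{d}(\alpha)=0$ if $\alpha$ is a square). *)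

From mathcomp Require Import all_boot all_order all_algebra.
Set Implicit Arguments. Unset Strict Implicit. Unset Printing Implicit Defensive.
Import Order.TTheory GRing.Theory Num.Theory.
Local Open Scope ring_scope.

(* A field F equipped with a normalized discrete valuation v : F -> int
   (the value v 0 is irrelevant and never used). *)
Section LocalField.
Variables (F : fieldType) (v : F -> int).

Definition vring (x : F) : Prop := x = 0 \/ 0 <= v x.
Definition vmax (x : F) : Prop := x = 0 \/ 1 <= v x.

Definition valuation_axioms : Prop :=
  [/\ forall x y, x != 0 -> y != 0 -> v (x * y) = v x + v y,
      forall x y, x != 0 -> y != 0 -> x + y != 0 ->
                  Order.min (v x) (v y) <= v (x + y)
    & exists pi : F, pi != 0 /\ v pi = 1 ].

Definition vcomplete : Prop :=
  forall u : nat -> F,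
    (forall k : int, exists N, forall m n, (N <= m)%N -> (N <= n)%N ->
        u m - u n = 0 \/ k <= v (u m - u n)) ->
    exists l : F, forall k : int, exists N, forall n, (N <= n)%N ->
        u n - l = 0 \/ k <= v (u n - l).

Definition finite_residue : Prop :=
  exists s : seq F, (forall y, y \in s -> vring y) /\
    forall x, vring x -> exists2 y, y \in s & vmax (x - y).

(* F is a non-archimedean local field of characteristic 0 (completion of a
   number field) lying over a dyadic place: the residue characteristic is 2,
   i.e. 2 lies in the maximal ideal. *)
Definition dyadic_local_field : Prop :=
  [/\ valuation_axioms, vcomplete, finite_residue,
      (forall n : nat, (0 < n)%N -> n%:R != 0 :> F)
    & vmax 2].

Definition vec := 'rV[F]_2.

Definition is_lattice (L : vec -> Prop) : Prop :=
  [/\ L 0,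
      (forall x y, L x -> L y -> L (x + y)),
      (forall a x, vring a -> L x -> L (a *: x)),
      (exists n (g : 'I_n -> vec), (forall i, L (g i)) /\
         forall x, L x -> exists c : 'I_n -> F,
            (forall i, vring (c i)) /\ x = \sum_i c i *: g i)
    &
      (forall w : vec, exists n (g : 'I_n -> vec) (c : 'I_n -> F),
         (forall i, L (g i)) /\ w = \sum_i c i *: g i)].

Definition qform (lam : F) (x : vec) : F :=
  x 0 0 ^+ 2 + lam * x 0 1 ^+ 2.

(* n(L) ⊆ o : the fractional ideal generated by q(L) lies in o *)
Definition norm_in_o (lam : F) (L : vec -> Prop) : Prop :=
  forall x, L x -> vring (qform lam x).

Definition o_maximal (lam : F) (L : vec -> Prop) : Prop :=
  [/\ is_lattice L, norm_in_o lam L &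
      forall L' : vec -> Prop, is_lattice L' ->
        (forall x, L x -> L' x) -> (exists x, L' x /\ ~ L x) ->
        ~ norm_in_o lam L'].

Definition std_lattice (x : vec) : Prop := vring (x 0 0) /\ vring (x 0 1).

Definition qdefect (a : F) (z : F) : Prop :=
  forall xi : F, exists r : F, vring r /\ z = (a - xi ^+ 2) * r.

End LocalField.

(* Both sides are equivalent to -lam not being a square modulo p^2, i.e. to
   v (t^2 + lam) <= 1 for every t.
   Defect: the residue field is finite of characteristic 2, so the Frobenius
   is injective and eventually periodic on it, hence onto; thus -lam is a
   square modulo p and d(-lam) is contained in p, while p is contained in
   d(-lam) exactly when no -lam - xi^2 lies in p^2.
   Lattice: writing q(x, y) = y^2 (t^2 + lam) with t = x / y, the bound on
   v (t^2 + lam) makes y, hence x, integral as soon as q(x, y) is, so o^2 is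
   maximal. Conversely, if t^2 + lam lies in p^2, then adding w = (t/pi, 1/pi)
   to o^2 keeps the norm integral, because
   q(y + c w) = q(y) + (2/pi) c (t y_1 + lam y_2) + c^2 (t^2 + lam) / pi^2
   and 2 lies in p. *)
From mathcomp Require Import all_boot all_order all_algebra.
From mathcomp Require Import zify ring.
Import Order.TTheory GRing.Theory Num.Theory.
Local Open Scope ring_scope.
Set Implicit Arguments. Unset Strict Implicit. Unset Printing Implicit Defensive.

Section Valuation.
Variables (F : fieldType) (v : F -> int).
Hypothesis hv : valuation_axioms v.

(* lia treats convertible but syntactically different copies of [v t] as
   unrelated atoms; ssreflect's [set] identifies them. *)
Ltac vlia :=
  repeat match goal with H : context [v _] |- _ => revert H end;
  repeat match goal with
         |- context [v ?t] => let a := fresh in set a := v t; clearbody a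
         end;
  intros; lia.

(* The fractional ideal p^k; [vge 0] and [vge 1] are convertible to [vring v]
   and [vmax v]. *)
Definition vge (k : int) (x : F) : Prop := x = 0 \/ k <= v x.

Definition square_mod_p2 (a : F) : Prop := exists xi : F, vge 2 (a - xi ^+ 2).

Lemma valM x y : x != 0 -> y != 0 -> v (x * y) = v x + v y.
Proof. by case: hv => valM _ _; apply: valM. Qed.

Lemma val1 : v 1 = 0.
Proof. by apply: (addrI (v 1)); rewrite -valM ?oner_neq0 // mulr1 addr0. Qed.

Lemma valN x : v (- x) = v x.
Proof.
have nN1 : (-1 : F) != 0 by rewrite oppr_eq0 oner_neq0.
have vN1 : v (-1) = 0 by have := valM nN1 nN1; rewrite mulrNN mulr1 val1; vlia.
have [->|nx] := eqVneq x 0; first by rewrite oppr0.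
by rewrite -mulN1r valM // vN1 add0r.
Qed.

Lemma valV x : x != 0 -> v x^-1 = - v x.
Proof. by move=> nx; have := valM nx (invr_neq0 nx); rewrite mulfV // val1; vlia. Qed.

Lemma uniformizer : exists2 pi : F, pi != 0 & v pi = 1.
Proof. by case: hv => _ _ [pi [npi vpi]]; exists pi. Qed.

Lemma vge_val (k : int) x : x != 0 -> vge k x -> k <= v x.
Proof. by move=> nx [x0|//]; rewrite x0 eqxx in nx. Qed.

Lemma vgeW (k l : int) x : k <= l -> vge l x -> vge k x.
Proof. by move=> kl [->|lx]; [left | right; vlia]. Qed.

Lemma vgeD (k : int) x y : vge k x -> vge k y -> vge k (x + y).
Proof.
have [->|nx] := eqVneq x 0; first by rewrite add0r.
have [->|ny] := eqVneq y 0; first by rewrite addr0.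
have [->|nxy] := eqVneq (x + y) 0; first by left.
move=> /(vge_val nx) kx /(vge_val ny) ky; right; case: hv => _ ultra _.
by move: (ultra x y nx ny nxy); rewrite ge_min => /orP[]; apply: le_trans.
Qed.

Lemma vgeN (k : int) x : vge k x -> vge k (- x).
Proof. by case=> [->|kx]; [left; rewrite oppr0 | right; rewrite valN]. Qed.

Lemma vgeM (k l : int) x y : vge k x -> vge l y -> vge (k + l) (x * y).
Proof.
have [->|nx] := eqVneq x 0; first by left; rewrite mul0r.
have [->|ny] := eqVneq y 0; first by left; rewrite mulr0.
by move=> /(vge_val nx) kx /(vge_val ny) ly; right; rewrite valM //; vlia.
Qed.

Lemma vge_sqr (k : int) x : vge (k + k - 1) (x ^+ 2) -> vge k x.
Proof.
have [->|nx] := eqVneq x 0; first by left.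
by move=> /(vge_val (expf_neq0 2 nx)); rewrite expr2 valM //; right; vlia.
Qed.

Lemma vring1 : vring v 1.
Proof. by right; rewrite val1. Qed.

Lemma vringM x y : vring v x -> vring v y -> vring v (x * y).
Proof. exact: vgeM. Qed.

Lemma vmaxM x y : vring v x -> vmax v y -> vmax v (x * y).
Proof. exact: vgeM. Qed.

Lemma vringX x n : vring v x -> vring v (x ^+ n).
Proof.
move=> hx; elim: n => [|n IH]; first by rewrite expr0; apply: vring1.
by rewrite exprS; apply: vringM.
Qed.

Lemma vring_sqr x : vring v (x ^+ 2) -> vring v x.
Proof. by move=> hx; apply: (@vge_sqr 0); apply: vgeW hx. Qed.

Lemma vmax_sqr x : vmax v (x ^+ 2) -> vmax v x.
Proof. exact: (@vge_sqr 1). Qed.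

Lemma sqr_inj_mod_p x y : vmax v 2 -> vring v x -> vring v y ->
  vmax v (x ^+ 2 - y ^+ 2) -> vmax v (x - y).
Proof.
move=> p2 hx hy hxy; apply: vmax_sqr.
have -> : (x - y) ^+ 2 = (x ^+ 2 - y ^+ 2) - y * (x - y) * 2 by ring.
exact: vgeD hxy (vgeN (vmaxM (vringM hy (vgeD hx (vgeN hy))) p2)).
Qed.

Lemma expn2_inj_mod_p n x y : vmax v 2 -> vring v x -> vring v y ->
  vmax v (x ^+ (2 ^ n) - y ^+ (2 ^ n)) -> vmax v (x - y).
Proof.
move=> p2; elim: n x y => [|n IH] x y hx hy; first by rewrite !expr1.
rewrite expnS !exprM => hxy; apply: sqr_inj_mod_p => //.
by apply: IH => //; apply: vringX.
Qed.

Lemma residue_pigeonhole (u : nat -> F) : finite_residue v ->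
  (forall n, vring v (u n)) -> exists i j, (i < j)%N /\ vmax v (u i - u j).
Proof.
case=> s [_ s_repr] hu.
pose near n y := (u n - y == 0) || (1 <= v (u n - y)).
have nearP n y : reflect (vmax v (u n - y)) (near n y).
  by apply: (iffP orP) => -[h|h]; [left; apply/eqP | right | left; apply/eqP | right].
have near_find n : (find (near n) s < size s)%N.
  rewrite -has_find; have [y ys hy] := s_repr _ (hu n).
  by apply/hasP; exists y => //; apply/nearP.
pose f (i : 'I_(size s).+1) : 'I_(size s) := Ordinal (near_find i).
have /injectivePn[i [j nij fij]] : ~~ injectiveb f.
  by apply/injectiveP => /leq_card; rewrite !card_ord ltnn.
have hij : vmax v (u i - u j).
  have ef : find (near i) s = find (near j) s := congr1 val fij.
  pose y := nth 0 s (find (near j) s).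
  have /nearP hi : near i y by rewrite /y -ef nth_find ?has_find.
  have /nearP hj : near j y by rewrite nth_find ?has_find.
  by rewrite (_ : u i - u j = (u i - y) - (u j - y)); [apply: vgeD (vgeN hj) | ring].
case: (ltngtP i j) => [lt | gt | /val_inj eq]; last by rewrite eq eqxx in nij.
- by exists i, j.
- by exists j, i; split; rewrite // -opprB; apply: vgeN.
Qed.

Lemma residue_square a : finite_residue v -> vmax v 2 -> vring v a ->
  exists xi, vmax v (a - xi ^+ 2).
Proof.
move=> hres p2 ha.
have [i [j [lt_ij hij]]] := residue_pigeonhole hres (fun n => vringX (2 ^ n) ha).
exists (a ^+ (2 ^ (j - i).-1)); apply: (@expn2_inj_mod_p i) => //.
  by do 2!apply: vringX.
by rewrite -!exprM -expnS -expnD (_ : (_ + _)%N = j) //; lia.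
Qed.

Lemma nonsquare_mod_p2_bound a : ~ square_mod_p2 a ->
  forall xi : F, a - xi ^+ 2 != 0 /\ v (a - xi ^+ 2) <= 1.
Proof.
move=> nsq xi; have [d0|nd] := eqVneq (a - xi ^+ 2) 0.
  by case: nsq; exists xi; left.
split=> //; rewrite leNgt; apply/negP => gt1.
by apply: nsq; exists xi; right; vlia.
Qed.

Lemma qdefect_in_p a z : finite_residue v -> vmax v 2 -> vring v a ->
  qdefect v a z -> vmax v z.
Proof.
move=> hres p2 ha hz; have [xi hxi] := residue_square hres p2 ha.
by have [r [hr ->]] := hz xi; rewrite mulrC; apply: vmaxM.
Qed.

Lemma p_in_qdefect a z : ~ square_mod_p2 a -> vmax v z -> qdefect v a z.
Proof.
move=> nsq hz xi; have [nd le1] := nonsquare_mod_p2_bound nsq xi.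
exists (z / (a - xi ^+ 2)); split; last by rewrite mulrC divfK.
have hinv : vge (-1) (a - xi ^+ 2)^-1 by right; rewrite valV //; vlia.
exact: vgeM hz hinv.
Qed.

Lemma nonsquare_of_qdefect a pi : pi != 0 -> v pi = 1 ->
  qdefect v a pi -> ~ square_mod_p2 a.
Proof.
move=> npi vpi hpi [xi hxi]; have [r [hr epi]] := hpi xi.
have nd : a - xi ^+ 2 != 0 by apply: contraNneq npi => d0; rewrite epi d0 mul0r.
have nr : r != 0 by apply: contraNneq npi => r0; rewrite epi r0 mulr0.
move: (vge_val nd hxi) (vge_val nr hr) (congr1 v epi).
by rewrite valM // vpi; vlia.
Qed.

Lemma qdefect_eq_p_iff a : finite_residue v -> vmax v 2 -> vring v a ->
  (forall z, qdefect v a z <-> vmax v z) <-> ~ square_mod_p2 a.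
Proof.
move=> hres p2 ha; split=> [hd | nsq z].
  have [pi npi vpi] := uniformizer; apply: (nonsquare_of_qdefect npi vpi).
  by apply/hd; right; rewrite vpi.
by split; [apply: qdefect_in_p | apply: p_in_qdefect].
Qed.

Lemma ord2P (i : 'I_2) : i = 0 \/ i = 1.
Proof. by case: i => [[|[|//]]] ?; [left | right]; apply: val_inj. Qed.

Lemma vring_nat_bool (b : bool) : vring v b%:R.
Proof. by case: b; [apply: vring1 | left]. Qed.

Lemma is_lattice_std : is_lattice v (std_lattice v).
Proof.
have std_delta (i : 'I_2) : std_lattice v (delta_mx 0 i).
  by split; rewrite mxE; apply: vring_nat_bool.
split.
- by split; rewrite mxE; left.
- by move=> x y [x0 x1] [y0 y1]; split; rewrite mxE; apply: vgeD.
- by move=> a x ha [x0 x1]; split; rewrite mxE; apply: vringM.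
- exists 2%N, (delta_mx 0); split=> // x [x0 x1].
  exists (x 0); split; last exact: row_sum_delta.
  by move=> i; case: (ord2P i) => ->.
- move=> w; exists 2%N, (delta_mx 0), (w 0); split=> //.
  exact: row_sum_delta.
Qed.

Lemma is_lattice_adjoin (L : vec F -> Prop) (w : vec F) : is_lattice v L ->
  is_lattice v (fun x => exists2 c, vring v c & L (x - c *: w)).
Proof.
case=> L0 LD LZ [n [g [Lg gen]]] span.
have Lsub x : L x -> exists2 c, vring v c & L (x - c *: w).
  by exists 0; [left | rewrite scale0r subr0].
split.
- exact: Lsub.
- move=> x y [c hc Lx] [d hd Ly]; exists (c + d); first exact: vgeD.
  by rewrite scalerDl opprD addrACA; apply: LD.
- move=> a x ha [c hc Lx]; exists (a * c); first exact: vringM.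
  by rewrite -scalerA -scalerBr; apply: LZ.
- exists n.+1, (fun i => if unlift ord0 i is Some j then g j else w); split.
    move=> i; case: (unlift ord0 i) => [j|]; first exact: Lsub.
    by exists 1; [apply: vring1 | rewrite scale1r subrr].
  move=> x [c hc /gen[e [he ex]]].
  exists (fun i => if unlift ord0 i is Some j then e j else c); split.
    by move=> i; case: (unlift ord0 i).
  rewrite big_ord_recl unlift_none (eq_bigr (fun j => e j *: g j)) => [|j _].
    by rewrite -ex addrC subrK.
  by rewrite liftK.
- move=> y; have [m [g' [c' [Lg' ->]]]] := span y.
  by exists m, g', c'; split=> // i; apply: Lsub.
Qed.

Lemma norm_in_o_std lam : vring v lam -> norm_in_o v lam (std_lattice v).
Proof.
move=> hl x [x0 x1]; rewrite /qform.
by apply: vgeD; [apply: vringX | apply: vringM hl (vringX 2 x1)].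
Qed.

Lemma o_maximal_std_of_closed lam : vring v lam ->
  (forall w, vring v (qform lam w) -> std_lattice v w) ->
  o_maximal v lam (std_lattice v).
Proof.
move=> hl closed; split; [exact: is_lattice_std | exact: norm_in_o_std |].
by move=> L' _ _ [x [L'x stdNx]] normL'; apply/stdNx/closed/normL'.
Qed.

Lemma std_closed_of_nonsquare lam : vring v lam -> ~ square_mod_p2 (- lam) ->
  forall w, vring v (qform lam w) -> std_lattice v w.
Proof.
move=> hl nsq w; rewrite /qform; set x := w 0 0; set y := w 0 1 => hq.
suff hy : vring v y.
  split=> //; apply: vring_sqr; rewrite -(addrK (lam * y ^+ 2) (x ^+ 2)).
  exact: vgeD hq (vgeN (vringM hl (vringX 2 hy))).
have [->|ny] := eqVneq y 0; first by left.
have [nd le1] := nonsquare_mod_p2_bound nsq (x / y).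
have qE : x ^+ 2 + lam * y ^+ 2 = - (y ^+ 2 * (- lam - (x / y) ^+ 2)) by field.
have nq : x ^+ 2 + lam * y ^+ 2 != 0 by rewrite qE oppr_eq0 mulf_neq0 ?expf_neq0.
move: (vge_val nq hq); rewrite qE valN valM ?expf_neq0 // expr2 valM //.
by right; vlia.
Qed.

Lemma qformDZ lam (y w : vec F) c : qform lam (y + c *: w) =
  qform lam y + c * (2 * (y 0 0 * w 0 0 + lam * (y 0 1 * w 0 1)))
  + c ^+ 2 * qform lam w.
Proof. by rewrite /qform !mxE; ring. Qed.

Lemma nonsquare_of_o_maximal lam : vring v lam -> vmax v 2 ->
  o_maximal v lam (std_lattice v) -> ~ square_mod_p2 (- lam).
Proof.
move=> hl p2 [_ _ maximal] [t ht].
have [pi npi vpi] := uniformizer.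
have piV : vge (-1) pi^-1 by right; rewrite valV // vpi.
have ht' : vge 2 (t ^+ 2 + lam) by rewrite -[_ + lam]opprK opprD addrC; apply: vgeN.
have ti : vring v t.
  by apply: vring_sqr; rewrite -(addrK lam (t ^+ 2)); apply: vgeD (vgeW _ ht') (vgeN hl).
pose w : vec F := \row_j [:: t / pi; pi^-1]`_j.
apply: (maximal _ (is_lattice_adjoin w is_lattice_std)).
- by move=> x hx; exists 0; [left | rewrite scale0r subr0].
- exists w; split.
    by exists 1; [apply: vring1 | rewrite scale1r subrr; split; rewrite mxE; left].
  case=> _; rewrite mxE /= => /(vge_val (invr_neq0 npi)).
  by rewrite valV // vpi.
move=> x [c hc std_y]; rewrite -(subrK (c *: w) x) qformDZ.
move: std_y; set y := x - c *: w => std_y.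
have -> : qform lam w = (t ^+ 2 + lam) * (pi^-1 * pi^-1).
  by rewrite /qform !mxE /=; field.
have -> : 2 * (y 0 0 * w 0 0 + lam * (y 0 1 * w 0 1)) =
          2 * pi^-1 * (y 0 0 * t + lam * y 0 1).
  by rewrite !mxE /=; field.
case: std_y => y0 y1; apply: vgeD; first apply: vgeD.
- exact: norm_in_o_std.
- exact: vringM hc (vgeM (vgeM p2 piV) (vgeD (vringM y0 ti) (vringM hl y1))).
- exact: vringM (vringX 2 hc) (vgeM ht' (vgeM piV piV)).
Qed.

Lemma o_maximal_std_iff lam : vring v lam -> vmax v 2 ->
  o_maximal v lam (std_lattice v) <-> ~ square_mod_p2 (- lam).
Proof.
move=> hl p2; split; first exact: nonsquare_of_o_maximal.
by move=> nsq; apply: o_maximal_std_of_closed => //; apply: std_closed_of_nonsquare.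
Qed.

End Valuation.

Theorem lemma7p1 (F : fieldType) (v : F -> int) (lam : F) :
  dyadic_local_field v ->
  vring v lam -> lam != 0 -> (v lam = 0 \/ v lam = 1) ->
  (o_maximal v lam (std_lattice v) <->
   (forall z : F, qdefect v (- lam) z <-> vmax v z)).
Proof.
move=> [hv _ hres _ p2] hl _ _.
apply: (iff_trans (o_maximal_std_iff hv hl p2)).
exact: iff_sym (qdefect_eq_p_iff hv hres p2 (vgeN hv hl)).
Qed.
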